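(* Let $\mathcal G$ be the complete graph on $N\ge2$ nodes with all edge weights equal to $b>0$, and fix $\alpha,m,\tau,k>0$. Then the function $$J(\gamma)=\frac{\alpha}{2m}(N-1)\frac{1}{1+\dfrac{\gamma\tau Nb+k}{\gamma Nb(\gamma\tau Nb+k)+k^2mNb}},\qquad\gamma\ge0,$$ (the squared $\mathcal H_2$ norm of $H_{\mathrm{DAPI}}$ for this graph) is minimized over $[0,\infty)$ at $$\gamma^*=\frac{k}{Nb\tau}\big(\sqrt{Nbm\tau}-1\big)\quad\text{if } Nbm\tau>1,$$ and at $\gamma^*=0$ otherwise.
   Context: $H_{\mathrm{DAPI}}$ is the system $\dot\theta=\omega$, $\dot\omega=-\tfrac m\tau L_B\theta-\tfrac1\tau\omega+\tfrac1\tau\Omega+\tfrac1\tau w$, $\dot\Omega=-\tfrac1k\omega-\tfrac1k\gamma L_B\Omega$, output $y=(\alpha L_B)^{1/2}\theta$, where $L_B$ is the Laplacian of the complete graph with uniform edge weight $b$ (whose nonzero eigenvalues all equal $Nb$). $\|H\|_2^2:=\int_0^\infty\operatorname{tr}(Ce^{At}BB^Te^{A^Tt}C^T)\,dt$. *)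

From Stdlib Require Import Reals.
Open Scope R_scope.

Definition J_DAPI (N : nat) (b alpha m tau k gamma : R) : R :=
  let Nb := INR N * b in
  alpha / (2 * m) * (INR N - 1) *
  (1 / (1 + (gamma * tau * Nb + k) /
            (gamma * Nb * (gamma * tau * Nb + k) + k ^ 2 * m * Nb))).

Definition gamma_star (N : nat) (b m tau k : R) : R :=
  let Nb := INR N * b in
  if Rlt_dec 1 (Nb * m * tau)
  then k / (Nb * tau) * (sqrt (Nb * m * tau) - 1)
  else 0.

(* Put x := N b and u := gamma tau x + k, which sweeps [k, +oo) as gamma sweeps [0, +oo).
   Then the H2 norm is an increasing function of u / tau + k^2 m x / u, a sum of a linear
   and a reciprocal term.  By AM-GM this is smallest at u = k sqrt (x m tau), the point
   reached by gamma^*, when that value lies above k; otherwise it is increasing on [k, +oo)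
   and the minimum sits at u = k, i.e. gamma = 0. *)
From Stdlib Require Import Reals Lra Psatz.
Open Scope R_scope.

Definition lin_recip (a c u : R) : R := u / a + c / u.

Lemma lin_recip_sqrt_le (a c u : R) :
  0 < a -> 0 < c -> 0 < u -> lin_recip a c (sqrt (a * c)) <= lin_recip a c u.
Proof.
  intros Ha Hc Hu. unfold lin_recip.
  set (s := sqrt (a * c)).
  assert (Hs : 0 < s) by (apply sqrt_lt_R0; nra).
  assert (Hss : s * s = a * c) by (apply sqrt_sqrt; nra).
  clearbody s.
  assert (Hdiff : u / a + c / u - (s / a + c / s) = (u - s) ^ 2 / (a * u)).
  { replace c with (s * s / a) by (rewrite Hss; field; lra). field; lra. }
  assert (0 <= (u - s) ^ 2 / (a * u))
    by (apply Rle_mult_inv_pos; [apply pow2_ge_0 | nra]).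
  lra.
Qed.

Lemma lin_recip_le_increasing (a c u0 u : R) :
  0 < a -> 0 < u0 -> u0 <= u -> a * c <= u0 * u0 ->
  lin_recip a c u0 <= lin_recip a c u.
Proof.
  intros Ha Hu0 Hu Hac. unfold lin_recip.
  assert (Hdiff : u / a + c / u - (u0 / a + c / u0)
                  = (u - u0) * (u * u0 - a * c) / (a * u * u0)) by (field; lra).
  assert (0 <= (u - u0) * (u * u0 - a * c) / (a * u * u0))
    by (apply Rle_mult_inv_pos; [apply Rmult_le_pos | apply Rmult_lt_0_compat]; nra).
  lra.
Qed.

Lemma lin_recip_gt_lower (a c l u : R) :
  0 < a -> 0 < c -> 0 < l -> l <= u -> l / a < lin_recip a c u.
Proof.
  intros Ha Hc Hl Hu. unfold lin_recip.
  assert (l / a <= u / a)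
    by (apply Rmult_le_compat_r; [apply Rlt_le, Rinv_0_lt_compat |]; lra).
  assert (0 < c / u) by (apply Rdiv_lt_0_compat; lra).
  lra.
Qed.

Lemma lin_recip_min_above (a c l u : R) :
  0 < a -> 0 < c -> 0 < l -> l <= u ->
  lin_recip a c (Rmax l (sqrt (a * c))) <= lin_recip a c u.
Proof.
  intros Ha Hc Hl Hu. unfold Rmax.
  destruct (Rle_dec l (sqrt (a * c))) as [Hs | Hs].
  - apply lin_recip_sqrt_le; lra.
  - apply lin_recip_le_increasing; try lra.
    assert (0 <= sqrt (a * c)) by apply sqrt_pos.
    rewrite <- (sqrt_sqrt (a * c)) by nra. nra.
Qed.

Lemma J_DAPI_lin_recip (N : nat) (b alpha m tau k g : R) :
  0 < INR N * b -> 0 < m -> 0 < tau -> 0 < k -> 0 <= g ->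
  J_DAPI N b alpha m tau k g =
  alpha / (2 * m) * (INR N - 1) *
  (1 - / (lin_recip tau (k ^ 2 * m * (INR N * b)) (g * tau * (INR N * b) + k) - k / tau + 1)).
Proof.
  intros Hx Hm Ht Hk Hg. unfold J_DAPI, lin_recip. cbv zeta.
  set (x := INR N * b) in *.
  assert (0 <= g * tau * x) by (apply Rmult_le_pos; nra).
  assert (0 < k ^ 2) by (apply pow_lt; lra).
  assert (0 < k ^ 2 * m * x) by (apply Rmult_lt_0_compat; nra).
  assert (0 <= g * x * (g * tau * x + k)) by (apply Rmult_le_pos; nra).
  assert (Hrec : (g * tau * x + k) / tau + k ^ 2 * m * x / (g * tau * x + k) - k / tau + 1
                 = (g * x * (g * tau * x + k) + k ^ 2 * m * x + (g * tau * x + k))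
                   / (g * tau * x + k)) by (field; lra).
  rewrite Hrec. f_equal. field. lra.
Qed.

Lemma gamma_star_shift (N : nat) (b m tau k : R) :
  0 < INR N * b -> 0 < m -> 0 < tau -> 0 < k ->
  gamma_star N b m tau k * tau * (INR N * b) + k
  = Rmax k (sqrt (tau * (k ^ 2 * m * (INR N * b)))).
Proof.
  intros Hx Hm Ht Hk. unfold gamma_star. cbv zeta.
  set (x := INR N * b) in *.
  replace (tau * (k ^ 2 * m * x)) with (k * k * (x * m * tau)) by ring.
  rewrite (sqrt_mult_alt (k * k)), sqrt_square by nra.
  unfold Rmax. destruct (Rlt_dec 1 (x * m * tau)) as [H | H].
  - assert (1 < sqrt (x * m * tau)) by (rewrite <- sqrt_1; apply sqrt_lt_1; lra).
    destruct (Rle_dec k (k * sqrt (x * m * tau))); [field; lra | nra].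
  - assert (sqrt (x * m * tau) <= 1)
      by (rewrite <- sqrt_1; apply sqrt_le_1_alt; lra).
    destruct (Rle_dec k (k * sqrt (x * m * tau))); nra.
Qed.

Lemma gamma_star_ge0 (N : nat) (b m tau k : R) :
  0 < INR N * b -> 0 < m -> 0 < tau -> 0 < k -> 0 <= gamma_star N b m tau k.
Proof.
  intros Hx Hm Ht Hk.
  pose proof (gamma_star_shift N b m tau k Hx Hm Ht Hk) as Hshift.
  pose proof (Rmax_l k (sqrt (tau * (k ^ 2 * m * (INR N * b))))).
  assert (0 <= gamma_star N b m tau k * (tau * (INR N * b))) by nra.
  apply Rmult_le_reg_r with (tau * (INR N * b)); nra.
Qed.

Theorem corollary2 (N : nat) (b alpha m tau k : R) :
  (2 <= N)%nat -> 0 < b -> 0 < alpha -> 0 < m -> 0 < tau -> 0 < k ->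
  0 <= gamma_star N b m tau k /\
  (forall gamma : R, 0 <= gamma ->
     J_DAPI N b alpha m tau k (gamma_star N b m tau k)
       <= J_DAPI N b alpha m tau k gamma).
Proof.
  intros HN Hb Ha Hm Ht Hk.
  assert (HNr : 2 <= INR N) by (apply le_INR in HN; simpl in HN; lra).
  assert (Hx : 0 < INR N * b) by nra.
  pose proof (gamma_star_ge0 N b m tau k Hx Hm Ht Hk) as Hstar.
  split; [exact Hstar |]. intros g Hg.
  rewrite !J_DAPI_lin_recip by assumption.
  rewrite gamma_star_shift by assumption.
  set (x := INR N * b) in *.
  assert (Hc : 0 < k ^ 2 * m * x)
    by (apply Rmult_lt_0_compat; [apply Rmult_lt_0_compat; [apply pow_lt |] |]; lra).
  set (c := k ^ 2 * m * x) in *.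
  set (u0 := Rmax k (sqrt (tau * c))).
  assert (Hu0 : k <= u0) by apply Rmax_l.
  assert (Hmin : lin_recip tau c u0 <= lin_recip tau c (g * tau * x + k)).
  { apply lin_recip_min_above; try lra.
    assert (0 <= g * tau * x) by (apply Rmult_le_pos; [apply Rmult_le_pos |]; lra). lra. }
  assert (Hpos : k / tau < lin_recip tau c u0) by (apply lin_recip_gt_lower; lra).
  apply Rmult_le_compat_l; [apply Rmult_le_pos; [apply Rlt_le, Rdiv_lt_0_compat |]; lra |].
  apply Rplus_le_compat_l, Ropp_le_contravar, Rinv_le_contravar; lra.
Qed.
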